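(* Let $\epsilon>0$ and let $a_1,\dots,a_N\in(0,1)$ satisfy $\sum_{i=1}^Na_i=1$ and $a_{N-1}+a_N\ge\epsilon$. Then \[\sum_{j=1}^N\frac{a_j}{\sum_{i\ge j}a_i}\le\lceil\log_2(1/\epsilon)\rceil+2.\] *)

From HB Require Import structures.
From mathcomp Require Import all_boot all_order all_algebra.
From mathcomp Require Import all_classical all_reals all_analysis.
Import Order.TTheory GRing.Theory Num.Theory.
Local Open Scope ring_scope.

Definition log2 {R : realType} (x : R) : R := ln x / ln 2.

(** Write [S_j] for the tail sum [a_j + ... + a_N], so [S_1 = 1] and [a_j = S_j - S_(j+1)].
    Since [1 - t <= -ln t], each term [a_j / S_j = 1 - S_(j+1) / S_j] is at most
    [ln S_j - ln S_(j+1)]; hence the terms with [j <= N - 2] telescope to at most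
    [-ln S_(N-1) <= ln (1/eps) <= log2 (1/eps)], and the last two terms are at most [1]. *)
From HB Require Import structures.
From mathcomp Require Import all_boot all_order all_algebra.
From mathcomp Require Import all_classical all_reals all_analysis.
From mathcomp Require Import lra zify.
Import Order.TTheory GRing.Theory Num.Theory.
Local Open Scope ring_scope.

Lemma relB_le_lnB {R : realType} (x y : R) :
  0 < y -> y <= x -> (x - y) / x <= ln x - ln y.
Proof.
move=> y_gt0 le_yx.
have x_gt0 : 0 < x by apply: lt_le_trans le_yx.
have yx_gt0 : 0 < y / x by rewrite divr_gt0.
have := @le_ln1Dx R (y / x - 1); rewrite subrKC ln_div ?posrE //.
rewrite mulrBl divff ?gt_eqF //; lra.
Qed.

Lemma sum_relB_le_lnB {R : realType} (S : nat -> R) (m n : nat) :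
  (m <= n)%N -> (forall j, (m <= j <= n)%N -> 0 < S j) ->
  (forall j, (m <= j < n)%N -> S j.+1 <= S j) ->
  \sum_(m <= j < n) (S j - S j.+1) / S j <= ln (S m) - ln (S n).
Proof.
move=> le_mn S_gt0 S_decr.
rewrite -opprB -(telescope_sumr (fun j => ln (S j)) le_mn) -sumrN.
apply: ler_sum_nat => j /andP[le_mj lt_jn]; rewrite opprB.
apply: relB_le_lnB; last by rewrite S_decr ?le_mj.
by rewrite S_gt0 // leqW.
Qed.

Lemma ln2_lt1 {R : realType} : ln (2 : R) < 1.
Proof.
have lt_2e : (2 : R) < expR 1 by have := @expR_gt1Dx R 1 (oner_neq0 R).
by rewrite -[ltRHS](expRK 1) ltr_ln ?posrE ?expR_gt0.
Qed.

Lemma ln_le_log2 {R : realType} (x : R) : 1 <= x -> ln x <= log2 x.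
Proof.
move=> ge1_x; have ln2_gt0 : 0 < ln (2 : R) by apply: ln_gt0; lra.
rewrite /log2 ler_pdivlMr // ler_piMr ?ln_ge0 //.
exact/ltW/ln2_lt1.
Qed.

Section TailSums.

Context {R : realType} {a : nat -> R} {m n : nat}.
Hypothesis a_gt0 : forall i, (m <= i < n)%N -> 0 < a i.

Local Notation tail j := (\sum_(j <= i < n) a i).

Lemma sum_segment_ge0 j k :
  (m <= j)%N -> (k <= n)%N -> 0 <= \sum_(j <= i < k) a i.
Proof.
move=> le_mj le_kn; rewrite big_nat_cond sumr_ge0 // => i.
rewrite andbT => /andP[le_ji lt_ik]; apply/ltW/a_gt0.
by rewrite (leq_trans le_mj le_ji) (leq_trans lt_ik le_kn).
Qed.

Lemma ler_tail j k : (m <= j <= k)%N -> (k <= n)%N -> tail k <= tail j.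
Proof.
move=> /andP[le_mj le_jk] le_kn.
by rewrite (big_cat_nat le_jk le_kn) /= lerDr sum_segment_ge0.
Qed.

Lemma tail_gt0 j : (m <= j < n)%N -> 0 < tail j.
Proof.
move=> /andP[le_mj lt_jn]; rewrite big_ltn //.
have := a_gt0 j; have := sum_segment_ge0 j.+1 n (leqW le_mj) (leqnn n).
rewrite le_mj lt_jn; lra.
Qed.

Lemma tail_ratio_le1 j : (m <= j < n)%N -> a j / tail j <= 1.
Proof.
move=> jmn; have /andP[le_mj lt_jn] := jmn.
rewrite ler_pdivrMr ?tail_gt0 // mul1r [leRHS]big_ltn // lerDl.
exact: sum_segment_ge0 j.+1 n (leqW le_mj) (leqnn n).
Qed.

Lemma sum_tail_ratio_le_lnB k : (m <= k < n)%N ->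
  \sum_(m <= j < k) a j / tail j <= ln (tail m) - ln (tail k).
Proof.
move=> /andP[le_mk lt_kn].
have tail_diff j : (j < k)%N -> a j = tail j - tail j.+1.
  by move=> lt_jk; rewrite big_ltn ?addrK // (ltn_trans lt_jk).
under eq_big_nat => j /andP[_ lt_jk] do rewrite (tail_diff j lt_jk).
apply: sum_relB_le_lnB => // j /andP[le_mj jk].
  by rewrite tail_gt0 // le_mj (leq_ltn_trans jk lt_kn).
by rewrite ler_tail ?le_mj ?leqnSn // (ltn_trans jk lt_kn).
Qed.

End TailSums.

Theorem lemma6p11 (R : realType) (eps : R) (N : nat) (a : nat -> R)
  (heps : 0 < eps)
  (ha : forall i : nat, (1 <= i <= N)%N -> 0 < a i < 1)
  (hsum : \sum_(1 <= i < N.+1) a i = 1)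
  (hlast : eps <= a N.-1 + a N) :
  \sum_(1 <= j < N.+1) a j / (\sum_(j <= i < N.+1) a i)
    <= (Num.ceil (log2 (1 / eps)))%:~R + 2.
Proof.
have a_gt0 i : (1 <= i < N.+1)%N -> 0 < a i by move=> /ha /andP[].
have ge2_N : (2 <= N)%N.
  case: N ha hsum {hlast a_gt0} => [|[|//]] ha.
    by rewrite big_geq // => /esym/eqP; rewrite oner_eq0.
  by rewrite big_nat1 => a1; have := ha 1%N isT; rewrite a1 ltxx andbF.
have range : (1 <= N.-1 < N.+1)%N by lia.
pose t := \sum_(N.-1 <= i < N.+1) a i.
have eps_le_t : eps <= t.
  by rewrite /t big_ltn ?(prednK (ltnW ge2_N)) ?big_nat1 //; lia.
have t_le1 : t <= 1.
  by rewrite /t -hsum; apply: (ler_tail a_gt0); lia.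
have head := sum_tail_ratio_le_lnB a_gt0 N.-1 range.
rewrite hsum ln1 sub0r -/t in head.
have last2 : \sum_(N.-1 <= j < N.+1) a j / (\sum_(j <= i < N.+1) a i) <= 2.
  apply: le_trans (_ : _ <= \sum_(N.-1 <= j < N.+1) 1) _.
    by apply: ler_sum_nat => j /andP[le_j lt_j]; apply: (tail_ratio_le1 a_gt0); lia.
  by rewrite sumr_const_nat (_ : N.+1 - N.-1 = 2)%N //; lia.
have ln_t : - ln t <= ln (1 / eps).
  by rewrite div1r lnV ?posrE // lerN2 ler_ln ?posrE //; lra.
have ge1_inv_eps : 1 <= 1 / eps by rewrite div1r invf_ge1 //; lra.
have := ln_le_log2 (1 / eps) ge1_inv_eps; have := ceil_ge (log2 (1 / eps)).
rewrite (@big_cat_nat _ _ _ N.-1) //=; [lra | lia | lia].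
Qed.
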